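(* Let $\Omega$ be a non-empty bounded open subset of $\mathbf{R}^2$, let $h:\Omega\to\mathbf{R}$ be continuous, and let $\alpha,\beta:\Omega\to\mathbf{R}$ be $C^1$ functions such that $|\alpha_x\beta_y-\alpha_y\beta_x|+|h|>0$ and $(\alpha_x\beta_y-\alpha_y\beta_x)h\ge0$ in $\Omega$. Then any $C^1$ solution $(u,v):\Omega\to\mathbf{R}^2$ in $\Omega$ of the system $$u_xv_y-u_yv_x=h,\qquad \beta_yu_x-\beta_xu_y-\alpha_yv_x+\alpha_xv_y=0$$ satisfies the convex hull-like property in $\Omega$.
   Context: A function $\psi:\mathbf{R}^2\to\mathbf{R}$ is quasi-convex if for each $r\in\mathbf{R}$ the set $\psi^{-1}(]-\infty,r])$ is convex. A continuous function $f:\Omega\to\mathbf{R}^2$ satisfies the convex hull-like property in $\Omega$ if for every continuous quasi-convex $\psi:\mathbf{R}^2\to\mathbf{R}$ there exists $x^*\in\partial\Omega$ such that $\limsup_{x\to x^*,\,x\in\Omega}\psi(f(x))=\sup_{x\in\Omega}\psi(f(x))$. *)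

From Stdlib Require Import Reals.
From Coquelicot Require Import Coquelicot.
Open Scope R_scope.

Definition R2 : Type := (R * R)%type.

Definition dist2 (p q : R2) : R :=
  sqrt ((fst p - fst q)^2 + (snd p - snd q)^2).

Definition bounded2 (O : R2 -> Prop) : Prop :=
  exists M : R, forall p, O p -> dist2 p (0, 0) <= M.

Definition boundary2 (O : R2 -> Prop) (p : R2) : Prop :=
  (forall eps : R, 0 < eps -> exists q, O q /\ dist2 q p < eps) /\
  (forall eps : R, 0 < eps -> exists q, ~ O q /\ dist2 q p < eps).

Definition C1_on (O : R2 -> Prop) (f fx fy : R2 -> R) : Prop :=
  forall p, O p ->
    is_derive (fun t => f (t, snd p)) (fst p) (fx p) /\
    is_derive (fun t => f (fst p, t)) (snd p) (fy p) /\
    continuous f p /\ continuous fx p /\ continuous fy p.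

Definition convex2 (S : R2 -> Prop) : Prop :=
  forall p q (t : R), S p -> S q -> 0 <= t <= 1 ->
    S ((1 - t) * fst p + t * fst q, (1 - t) * snd p + t * snd q).

Definition quasi_convex (psi : R2 -> R) : Prop :=
  forall r : R, convex2 (fun p => psi p <= r).

Definition sup_on (O : R2 -> Prop) (g : R2 -> R) : Rbar :=
  Lub_Rbar (fun r => exists x, O x /\ r = g x).

Definition limsup_on (O : R2 -> Prop) (g : R2 -> R) (x0 : R2) : Rbar :=
  Rbar_glb (fun s => exists eps : R, 0 < eps /\
     s = sup_on (fun x => O x /\ dist2 x x0 < eps) g).

Definition convex_hull_like (O : R2 -> Prop) (f : R2 -> R2) : Prop :=
  forall psi : R2 -> R,
    (forall q, continuous psi q) -> quasi_convex psi ->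
    exists xs : R2, boundary2 O xs /\
      limsup_on O (fun x => psi (f x)) xs = sup_on O (fun x => psi (f x)).

(* Suppose the supremum of phi = psi o (u, v) is not approached at any boundary
   point.  Then phi attains its maximum M inside O, and for some c < M the
   superlevel set K = {phi >= c} is a compact subset of O.  By the two equations,
   F_t = (u + t alpha, v + t beta) has Jacobian h + t^2 (alpha_x beta_y - alpha_y beta_x),
   which cannot vanish for t > 0 since both terms have the same sign and are not
   both zero.  For small t, the maximizers of psi o F_t over K lie in the interior
   of K; among them pick p whose image is farthest from a point z0 with
   psi z0 < M.  As F_t is a local diffeomorphism at p, some nearby q has
   F_t q - F_t p close to s (F_t p - z0).  If psi (F_t q) < psi (F_t p), then
   F_t p is a convex combination of F_t q and a point near z0, which contradicts
   quasi-convexity; otherwise F_t q is a maximizer farther from z0. *)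

From Stdlib Require Import Reals Lra Lia ZArith Classical ClassicalEpsilon.
From Coquelicot Require Import Coquelicot.
Open Scope R_scope.

Definition near (p q : R2) (d : R) : Prop :=
  Rabs (fst q - fst p) < d /\ Rabs (snd q - snd p) < d.

Lemma near_refl p d : 0 < d -> near p p d.
Proof. intros Hd; unfold near; rewrite !Rminus_diag, Rabs_R0; auto. Qed.

Lemma near_sym p q d : near p q d -> near q p d.
Proof. unfold near; rewrite (Rabs_minus_sym (fst q)), (Rabs_minus_sym (snd q)); auto. Qed.

Lemma near_trans p q r d1 d2 : near p q d1 -> near q r d2 -> near p r (d1 + d2).
Proof.
  unfold near; intros [H1 H2] [H3 H4]; split.
  - replace (fst r - fst p) with ((fst r - fst q) + (fst q - fst p)) by ring.
    eapply Rle_lt_trans; [apply Rabs_triang | lra].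
  - replace (snd r - snd p) with ((snd r - snd q) + (snd q - snd p)) by ring.
    eapply Rle_lt_trans; [apply Rabs_triang | lra].
Qed.

Lemma near_le p q d1 d2 : near p q d1 -> d1 <= d2 -> near p q d2.
Proof. unfold near; intros [H1 H2] H; split; lra. Qed.

Lemma Rabs_le_sqrt_sum_sq a b : Rabs a <= sqrt (a ^ 2 + b ^ 2).
Proof. rewrite <- sqrt_Rsqr_abs; apply sqrt_le_1_alt; unfold Rsqr; nra. Qed.

Lemma near_of_dist2 p q e : dist2 q p < e -> near p q e.
Proof.
  unfold dist2, near; intros H; split.
  - eapply Rle_lt_trans; [apply Rabs_le_sqrt_sum_sq | exact H].
  - eapply Rle_lt_trans; [| exact H]; rewrite Rplus_comm; apply Rabs_le_sqrt_sum_sq.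
Qed.

Lemma dist2_lt_of_near p q e : near p q (e / 2) -> dist2 q p < e.
Proof.
  unfold dist2, near; intros [H1 H2].
  set (a := fst q - fst p) in *; set (b := snd q - snd p) in *.
  apply Rle_lt_trans with (Rabs a + Rabs b); [| lra].
  rewrite <- (sqrt_Rsqr (Rabs a + Rabs b)) by (generalize (Rabs_pos a) (Rabs_pos b); lra).
  apply sqrt_le_1_alt; unfold Rsqr.
  rewrite <- (pow2_abs a), <- (pow2_abs b).
  generalize (Rabs_pos a) (Rabs_pos b); nra.
Qed.

Lemma dist2_diag p : dist2 p p = 0.
Proof. unfold dist2; rewrite !Rminus_diag; replace (0 ^ 2 + 0 ^ 2) with 0 by ring; apply sqrt_0. Qed.

Lemma bounded2_box (O : R2 -> Prop) : bounded2 O ->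
  exists B, forall p, O p -> Rabs (fst p) <= B /\ Rabs (snd p) <= B.
Proof.
  intros [M HM]; exists M; intros p Hp; specialize (HM p Hp).
  unfold dist2 in HM; simpl in HM; rewrite !Rminus_0_r in HM; split.
  - eapply Rle_trans; [apply Rabs_le_sqrt_sum_sq | exact HM].
  - eapply Rle_trans; [| exact HM]; rewrite Rplus_comm; apply Rabs_le_sqrt_sum_sq.
Qed.

Lemma open_near (O : R2 -> Prop) p : open O -> O p ->
  exists d, 0 < d /\ forall q, near p q d -> O q.
Proof.
  intros HO Hp; destruct (HO p Hp) as [d Hd]; exists d; split; [apply cond_pos |].
  intros q [H1 H2]; apply Hd; split; assumption.
Qed.

Lemma continuous_near (f : R2 -> R) p : continuous f p ->
  forall e, 0 < e -> exists d, 0 < d /\ forall q, near p q d -> Rabs (f q - f p) < e.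
Proof.
  intros H e He.
  destruct (proj1 (filterlim_locally f (f p)) H (mkposreal e He)) as [d Hd].
  exists d; split; [apply cond_pos |].
  intros q [H1 H2]; apply (Hd q); split; assumption.
Qed.

Lemma superlevel_box (O : R2 -> Prop) (g : R2 -> R) c p :
  open O -> O p -> continuous g p -> c < g p ->
  exists r, 0 < r /\ forall y, near p y r -> O y /\ c <= g y.
Proof.
  intros HO Hp Hg Hc.
  destruct (open_near O p HO Hp) as [d1 [Hd1 Hd1']].
  destruct (continuous_near g p Hg (g p - c)) as [d2 [Hd2 Hd2']]; [lra |].
  exists (Rmin d1 d2); split; [apply Rmin_pos; auto |].
  intros y Hy; split.
  - apply Hd1'; eapply near_le; [exact Hy | apply Rmin_l].
  - assert (H := Hd2' y (near_le _ _ _ _ Hy (Rmin_r _ _))).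
    apply Rabs_def2 in H; lra.
Qed.

Definition converges (q : nat -> R2) (l : R2) : Prop :=
  forall e, 0 < e -> exists N, forall n, (N <= n)%nat -> near l (q n) e.

Definition strictly_increasing (s : nat -> nat) : Prop :=
  forall k, (s k < s (S k))%nat.

Lemma strictly_increasing_ge s : strictly_increasing s -> forall k, (k <= s k)%nat.
Proof. intros H k; induction k; [lia | specialize (H k); lia]. Qed.

Lemma strictly_increasing_le s : strictly_increasing s ->
  forall m n, (m <= n)%nat -> (s m <= s n)%nat.
Proof. intros H m n Hmn; induction Hmn; [lia | specialize (H m0); lia]. Qed.

Lemma converges_const p : converges (fun _ => p) p.
Proof. intros e He; exists 0%nat; intros n _; apply near_refl; exact He. Qed.

Lemma converges_continuous q l (f : R2 -> R) : converges q l -> continuous f l ->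
  forall e, 0 < e -> exists N, forall n, (N <= n)%nat -> Rabs (f (q n) - f l) < e.
Proof.
  intros Hq Hf e He; destruct (continuous_near f l Hf e He) as [d [Hd Hd']].
  destruct (Hq d Hd) as [N HN]; exists N; auto.
Qed.

Lemma inv_INR_S_pos n : 0 < / INR (S n).
Proof. apply Rinv_0_lt_compat, lt_0_INR; lia. Qed.

Lemma inv_INR_S_le m n : (m <= n)%nat -> / INR (S n) <= / INR (S m).
Proof. intros H; apply Rinv_le_contravar; [apply lt_0_INR; lia | apply le_INR; lia]. Qed.

Lemma INR_eventually_gt x : exists N, forall n, (N <= n)%nat -> x < INR n.
Proof.
  destruct (archimed (Rabs x)) as [H1 _].
  assert (H0 : 0 <= IZR (up (Rabs x))) by (generalize (Rabs_pos x); lra).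
  exists (Z.to_nat (up (Rabs x))); intros n Hn.
  assert (IZR (up (Rabs x)) <= INR n).
  { rewrite <- (Z2Nat.id (up (Rabs x))) by (apply le_IZR; exact H0).
    rewrite <- INR_IZR_INZ; apply le_INR; exact Hn. }
  generalize (Rle_abs x); lra.
Qed.

Lemma inv_INR_S_lt e : 0 < e -> exists N, forall n, (N <= n)%nat -> / INR (S n) < e.
Proof.
  intros He; destruct (INR_eventually_gt (/ e)) as [N HN]; exists N; intros n Hn.
  rewrite <- (Rinv_inv e); apply Rinv_lt_contravar.
  - apply Rmult_lt_0_compat; [apply Rinv_0_lt_compat; lra | apply lt_0_INR; lia].
  - rewrite S_INR; specialize (HN n Hn); lra.
Qed.

Lemma ValAdh_subseq (x : nat -> R) (l : R) : ValAdh x l ->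
  exists s, strictly_increasing s /\ forall k, Rabs (x (s k) - l) < / INR (S k).
Proof.
  intros H.
  assert (Hk : forall k, exists c : nat -> nat,
             forall N, (N <= c N)%nat /\ Rabs (x (c N) - l) < / INR (S k)).
  { intros k; apply (choice (fun N n => (N <= n)%nat /\ Rabs (x n - l) < / INR (S k))).
    intros N.
    destruct (H (disc l (mkposreal _ (inv_INR_S_pos k))) N) as [n [Hn Hv]].
    - exists (mkposreal _ (inv_INR_S_pos k)); intros y Hy; exact Hy.
    - exists n; split; auto. }
  destruct (choice _ Hk) as [c Hc].
  (* each index is chosen beyond the previous one, at the next precision level *)
  pose (s := fix s k := match k with O => c O O | S k' => c k (S (s k')) end).
  exists s; split.
  - intros k; simpl; destruct (Hc (S k) (S (s k))); lia.
  - intros [|k]; apply Hc.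
Qed.

Lemma bounded_seq_convergent_subseq (q : nat -> R2) (B : R) :
  (forall n, Rabs (fst (q n)) <= B /\ Rabs (snd (q n)) <= B) ->
  exists s, strictly_increasing s /\ exists l, converges (fun k => q (s k)) l.
Proof.
  intros HB.
  destruct (Bolzano_Weierstrass (fun n => fst (q n)) (fun c => - B <= c <= B)
              (compact_P3 _ _)) as [l1 Hl1].
  { intros n; apply Rabs_le_between, HB. }
  destruct (ValAdh_subseq _ _ Hl1) as [s1 [Hs1 Hs1']].
  destruct (Bolzano_Weierstrass (fun n => snd (q (s1 n))) (fun c => - B <= c <= B)
              (compact_P3 _ _)) as [l2 Hl2].
  { intros n; apply Rabs_le_between, HB. }
  destruct (ValAdh_subseq _ _ Hl2) as [s2 [Hs2 Hs2']].
  exists (fun k => s1 (s2 k)); split.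
  - intros k; assert (H := strictly_increasing_le s1 Hs1 _ _ (Hs2 k)).
    specialize (Hs1 (s2 k)); lia.
  - exists (l1, l2); intros e He; destruct (inv_INR_S_lt e He) as [N HN].
    exists N; intros n Hn; split; simpl.
    + eapply Rlt_le_trans; [apply Hs1' |].
      eapply Rle_trans; [apply inv_INR_S_le, (strictly_increasing_ge s2 Hs2 n) |].
      left; apply HN; exact Hn.
    + eapply Rlt_trans; [apply Hs2' | apply HN; exact Hn].
Qed.

Lemma sup_on_ub (A : R2 -> Prop) (f : R2 -> R) a : A a -> Rbar_le (f a) (sup_on A f).
Proof. intros Ha; apply (proj1 (Lub_Rbar_correct _)); exists a; auto. Qed.

Lemma sup_on_least (A : R2 -> Prop) (f : R2 -> R) (b : Rbar) :
  (forall a, A a -> Rbar_le (f a) b) -> Rbar_le (sup_on A f) b.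
Proof. intros H; apply (proj2 (Lub_Rbar_correct _)); intros x [a [Ha ->]]; auto. Qed.

Lemma sup_on_max (A : R2 -> Prop) (f : R2 -> R) p :
  A p -> (forall a, A a -> f a <= f p) -> sup_on A f = f p.
Proof.
  intros Hp H; apply Rbar_le_antisym; [apply sup_on_least; exact H | apply sup_on_ub; exact Hp].
Qed.

Lemma Rbar_lt_between (x : R) (y : Rbar) : Rbar_lt x y -> exists z : R, x < z /\ Rbar_lt z y.
Proof.
  destruct y as [y | |]; simpl; intros H.
  - exists ((x + y) / 2); simpl; lra.
  - exists (x + 1); simpl; split; [lra | exact I].
  - contradiction.
Qed.

Definition maximizing (A : R2 -> Prop) (f : R2 -> R) (q : nat -> R2) : Prop :=
  forall x : R, Rbar_lt x (sup_on A f) -> exists N, forall n, (N <= n)%nat -> x < f (q n).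

Lemma maximizing_subseq A f q s : strictly_increasing s -> maximizing A f q ->
  maximizing A f (fun k => q (s k)).
Proof.
  intros Hs H x Hx; destruct (H x Hx) as [N HN]; exists N; intros n Hn.
  apply HN; assert (Hg := strictly_increasing_ge s Hs n); lia.
Qed.

Lemma maximizing_seq_exists (A : R2 -> Prop) (f : R2 -> R) : (exists a, A a) ->
  exists q, (forall n, A (q n)) /\ maximizing A f q.
Proof.
  intros [a0 Ha0].
  assert (Hlev : forall n, exists a, A a /\
            Rbar_lt (match sup_on A f with Finite s => s - / INR (S n) | _ => INR n end) (f a)).
  { intros n; apply NNPP; intros Hn.
    assert (Hle : Rbar_le (sup_on A f)
                    (match sup_on A f with Finite s => s - / INR (S n) | _ => INR n end)).
    { apply sup_on_least; intros a Ha; apply Rbar_not_lt_le; intros Hc; apply Hn; eauto. }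
    assert (Hub := sup_on_ub A f a0 Ha0).
    destruct (sup_on A f) as [s | |]; cbn [Rbar_le] in Hle, Hub; auto.
    generalize (inv_INR_S_pos n); lra. }
  destruct (choice _ Hlev) as [q Hq]; exists q; split; [intros n; apply Hq |].
  intros x Hx; destruct (sup_on A f) as [s | |]; cbn [Rbar_lt] in Hx, Hq.
  - destruct (inv_INR_S_lt (s - x)) as [N HN]; [lra |].
    exists N; intros n Hn; specialize (HN n Hn); destruct (Hq n); lra.
  - destruct (INR_eventually_gt x) as [N HN].
    exists N; intros n Hn; specialize (HN n Hn); destruct (Hq n); lra.
  - contradiction.
Qed.

Lemma attains_max (A : R2 -> Prop) (f : R2 -> R) (B : R) :
  (exists a, A a) -> (forall a, A a -> Rabs (fst a) <= B /\ Rabs (snd a) <= B) ->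
  (forall q l, (forall n, A (q n)) -> converges q l -> maximizing A f q ->
     A l /\ continuous f l) ->
  exists p, A p /\ forall a, A a -> f a <= f p.
Proof.
  intros Hne HB Hlim.
  destruct (maximizing_seq_exists A f Hne) as [q [Hq Hmax]].
  destruct (bounded_seq_convergent_subseq q B (fun n => HB _ (Hq n))) as [s [Hs [l Hl]]].
  destruct (Hlim _ l (fun k => Hq (s k)) Hl (maximizing_subseq A f q s Hs Hmax)) as [Al Cl].
  exists l; split; [exact Al |].
  assert (Hge : Rbar_le (sup_on A f) (f l)).
  { apply Rbar_not_lt_le; intros Hlt.
    destruct (Rbar_lt_between _ _ Hlt) as [x [Hx1 Hx2]].
    destruct (maximizing_subseq A f q s Hs Hmax x Hx2) as [N1 HN1].
    destruct (converges_continuous _ _ _ Hl Cl (x - f l)) as [N2 HN2]; [lra |].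
    specialize (HN1 (max N1 N2) ltac:(lia)); specialize (HN2 (max N1 N2) ltac:(lia)).
    apply Rabs_def2 in HN2; lra. }
  intros a Ha; exact (Rbar_le_trans _ _ _ (sup_on_ub A f a Ha) Hge).
Qed.

Lemma seq_compact_attains_max (A : R2 -> Prop) (f : R2 -> R) (B : R) :
  (exists a, A a) -> (forall a, A a -> Rabs (fst a) <= B /\ Rabs (snd a) <= B) ->
  (forall q l, (forall n, A (q n)) -> converges q l -> A l) ->
  (forall p, A p -> continuous f p) ->
  exists p, A p /\ forall a, A a -> f a <= f p.
Proof.
  intros Hne HB Hcl Hf; apply (attains_max A f B Hne HB).
  intros q l Hq Hl _; assert (Al := Hcl q l Hq Hl); auto.
Qed.

Lemma converges_boundary2 (O : R2 -> Prop) q l :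
  (forall n, O (q n)) -> converges q l -> ~ O l -> boundary2 O l.
Proof.
  intros Hq Hl Hn; split.
  - intros e He; destruct (Hl (e / 2)) as [N HN]; [lra |].
    exists (q N); split; [auto | apply dist2_lt_of_near, HN; lia].
  - intros e He; exists l; rewrite dist2_diag; auto.
Qed.

Lemma boundary2_exists (O : R2 -> Prop) : (exists p, O p) -> bounded2 O ->
  exists b, boundary2 O b.
Proof.
  intros [p0 Hp0] Hb; destruct (bounded2_box O Hb) as [B HB].
  (* walk right from p0 up to the supremum of the horizontal segment inside O *)
  set (E := fun s => 0 <= s /\ O (fst p0 + s, snd p0)).
  assert (HbE : bound E).
  { exists (B - fst p0); intros s [Hs1 Hs2]; destruct (HB _ Hs2) as [H1 _]; simpl in H1.
    apply Rabs_le_between in H1; lra. }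
  assert (HE0 : E 0) by (split; [lra | rewrite Rplus_0_r; destruct p0; exact Hp0]).
  destruct (completeness E HbE (ex_intro _ 0 HE0)) as [m [Hm1 Hm2]].
  assert (Hm0 : 0 <= m) by (apply Hm1; auto).
  exists (fst p0 + m, snd p0); split.
  - intros e He.
    assert (Hx : exists s, E s /\ m - e / 2 < s).
    { apply NNPP; intros Hc; assert (m <= m - e / 2); [| lra].
      apply Hm2; intros s Hs; apply Rnot_lt_le; intros Hs'; apply Hc; eauto. }
    destruct Hx as [s [[Hs0 Hs] Hs']]; assert (s <= m) by (apply Hm1; split; auto).
    exists (fst p0 + s, snd p0); split; [exact Hs |].
    apply dist2_lt_of_near; unfold near; simpl; rewrite Rminus_diag, Rabs_R0.
    split; [rewrite Rabs_left1 |]; lra.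
  - intros e He; exists (fst p0 + m + e / 4, snd p0); split.
    + intros Ho; assert (m + e / 4 <= m); [| lra].
      apply Hm1; split; [lra | rewrite <- Rplus_assoc; exact Ho].
    + apply dist2_lt_of_near; unfold near; simpl; rewrite Rminus_diag, Rabs_R0.
      replace (fst p0 + m + e / 4 - (fst p0 + m)) with (e / 4) by ring.
      rewrite Rabs_pos_eq; lra.
Qed.

Lemma limsup_on_le_sup_on (O : R2 -> Prop) (g : R2 -> R) b :
  Rbar_le (limsup_on O g b) (sup_on O g).
Proof.
  unfold limsup_on, Rbar_glb; destruct (Rbar_ex_glb _) as [s [Hs Hs']]; simpl; clear Hs'.
  eapply Rbar_le_trans; [apply Hs; exists 1; split; [lra | reflexivity] |].
  apply sup_on_least; intros a [Ha _]; apply sup_on_ub; exact Ha.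
Qed.

Lemma limsup_on_lt_sup_on (O : R2 -> Prop) (g : R2 -> R) b :
  boundary2 O b -> Rbar_lt (limsup_on O g b) (sup_on O g) ->
  exists e, 0 < e /\ exists m : R, Rbar_lt m (sup_on O g) /\
    forall q, O q -> near b q e -> g q <= m.
Proof.
  intros Hb Hlt; unfold limsup_on, Rbar_glb in Hlt.
  destruct (Rbar_ex_glb _) as [s [Hs' Hs]]; simpl in Hlt; clear Hs'.
  assert (Hx : exists eps, 0 < eps /\
             Rbar_lt (sup_on (fun x => O x /\ dist2 x b < eps) g) (sup_on O g)).
  { apply NNPP; intros Hc; apply (Rbar_lt_not_le _ _ Hlt), Hs.
    intros t [eps [Heps ->]]; apply Rbar_not_lt_le; intros Ht; apply Hc; eauto. }
  destruct Hx as [eps [Heps Hsup]].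
  destruct (proj1 Hb eps Heps) as [q0 [Hq0 Hq0']].
  assert (Hge := sup_on_ub (fun x => O x /\ dist2 x b < eps) g q0 (conj Hq0 Hq0')).
  assert (Hub : forall q, O q -> near b q (eps / 2) ->
            Rbar_le (g q) (sup_on (fun x => O x /\ dist2 x b < eps) g)).
  { intros q Hq Hn; apply sup_on_ub; split; [exact Hq | apply dist2_lt_of_near, Hn]. }
  destruct (sup_on (fun x => O x /\ dist2 x b < eps) g) as [m | |].
  - exists (eps / 2); split; [lra |]; exists m; split; [exact Hsup | exact Hub].
  - destruct (sup_on O g); contradiction.
  - contradiction.
Qed.

Lemma continuous_comp_R2 (psi f g : R2 -> R) x : (forall z, continuous psi z) ->
  continuous f x -> continuous g x -> continuous (fun y => psi (f y, g y)) x.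
Proof.
  intros Hp Hf Hg; apply (continuous_comp_2 f g (fun a b => psi (a, b))); auto.
  eapply continuous_ext; [| apply Hp]; intros [a b]; reflexivity.
Qed.

Definition perturb (f a : R2 -> R) (t : R) (x : R2) : R := f x + t * a x.

Lemma continuous_perturb (f a : R2 -> R) (t : R) x : continuous f x -> continuous a x ->
  continuous (perturb f a t) x.
Proof.
  intros Hf Ha; unfold perturb; apply (continuous_plus f (fun y => t * a y)); [exact Hf |].
  apply (continuous_scal (fun _ => t) a); [apply continuous_const | exact Ha].
Qed.

Lemma continuous_sq_dist (f g : R2 -> R) (z : R2) x : continuous f x -> continuous g x ->
  continuous (fun y => (f y - fst z) ^ 2 + (g y - snd z) ^ 2) x.
Proof.
  intros Hf Hg.
  assert (Hf' : continuous (fun y => f y - fst z) x)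
    by (apply (continuous_minus f (fun _ => fst z)); [exact Hf | apply continuous_const]).
  assert (Hg' : continuous (fun y => g y - snd z) x)
    by (apply (continuous_minus g (fun _ => snd z)); [exact Hg | apply continuous_const]).
  apply (continuous_ext (fun y => (f y - fst z) * (f y - fst z) + (g y - snd z) * (g y - snd z)));
    [intros y; simpl; ring |].
  apply (continuous_plus (fun y => (f y - fst z) * (f y - fst z)));
    apply (continuous_mult (fun y : R2 => _ : R)); assumption.
Qed.

Lemma perturbed_continuous (psi u v a b : R2 -> R) (l : R2) :
  (forall z, continuous psi z) -> continuous u l -> continuous v l ->
  continuous a l -> continuous b l ->
  continuous (fun z : R * R2 => psi (perturb u a (fst z) (snd z), perturb v b (fst z) (snd z)))
    (0, l).
Proof.
  intros Hpsi Hu Hv Ha Hb; unfold perturb.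
  assert (Hshift : forall f g : R2 -> R, continuous f l -> continuous g l ->
            continuous (fun z : R * R2 => f (snd z) + fst z * g (snd z)) (0, l)).
  { intros f g Hf Hg.
    apply (continuous_plus (fun z : R * R2 => f (snd z)) (fun z => fst z * g (snd z))).
    - apply (continuous_comp snd f); [apply continuous_snd | exact Hf].
    - apply (continuous_mult (fun z : R * R2 => fst z) (fun z => g (snd z))).
      + apply continuous_fst.
      + apply (continuous_comp snd g); [apply continuous_snd | exact Hg]. }
  apply (continuous_comp_2 (fun z : R * R2 => u (snd z) + fst z * a (snd z))
           (fun z => v (snd z) + fst z * b (snd z)) (fun x y => psi (x, y))); [auto | auto |].
  eapply continuous_ext; [| apply Hpsi]; intros [x y]; reflexivity.
Qed.

Lemma perturbed_limit (psi u v a b : R2 -> R) (l : R2) (q : nat -> R2) (t : nat -> R) :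
  (forall z, continuous psi z) -> continuous u l -> continuous v l ->
  continuous a l -> continuous b l -> converges q l ->
  (forall e, 0 < e -> exists N, forall k, (N <= k)%nat -> Rabs (t k) < e) ->
  forall e, 0 < e -> exists N, forall k, (N <= k)%nat ->
    Rabs (psi (perturb u a (t k) (q k), perturb v b (t k) (q k)) - psi (u l, v l)) < e.
Proof.
  intros Hpsi Hu Hv Ha Hb Hq Ht e He.
  destruct (proj1 (filterlim_locally _ _) (perturbed_continuous psi u v a b l Hpsi Hu Hv Ha Hb)
              (mkposreal e He)) as [d Hd].
  destruct (Hq d (cond_pos d)) as [N1 HN1]; destruct (Ht d (cond_pos d)) as [N2 HN2].
  exists (max N1 N2); intros k Hk.
  specialize (HN1 k ltac:(lia)); specialize (HN2 k ltac:(lia)).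
  assert (H := Hd (t k, q k)); unfold perturb in H; simpl in H.
  rewrite !Rmult_0_l, !Rplus_0_r in H; apply H.
  destruct HN1 as [H1 H2]; split; [| split; [exact H1 | exact H2]].
  change (Rabs (t k - 0) < d); rewrite Rminus_0_r; exact HN2.
Qed.

Lemma C1_on_continuous (O : R2 -> Prop) (f fx fy : R2 -> R) p :
  C1_on O f fx fy -> O p -> continuous f p.
Proof. intros Hf Hp; apply (Hf p Hp). Qed.

Lemma C1_on_perturb (O : R2 -> Prop) (f fx fy a ax ay : R2 -> R) (t : R) :
  C1_on O f fx fy -> C1_on O a ax ay ->
  C1_on O (perturb f a t) (perturb fx ax t) (perturb fy ay t).
Proof.
  intros Hf Ha p Hp.
  destruct (Hf p Hp) as [Hfx [Hfy [Cf [Cfx Cfy]]]].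
  destruct (Ha p Hp) as [Hax [Hay [Ca [Cax Cay]]]].
  split; [| split; [| split; [| split]]]; try apply continuous_perturb; auto.
  - apply (is_derive_plus (fun s => f (s, snd p)) (fun s => t * a (s, snd p)));
      [exact Hfx | apply is_derive_scal; exact Hax].
  - apply (is_derive_plus (fun s => f (fst p, s)) (fun s => t * a (fst p, s)));
      [exact Hfy | apply is_derive_scal; exact Hay].
Qed.

Lemma C1_on_directional (O : R2 -> Prop) (g gx gy : R2 -> R) (p : R2) (v1 v2 k : R) :
  open O -> C1_on O g gx gy -> O p -> 0 < k ->
  exists s0, 0 < s0 /\ forall s, 0 < s < s0 ->
    Rabs (g (fst p + s * v1, snd p + s * v2) - g p - s * (v1 * gx p + v2 * gy p)) <= k * s.
Proof.
  intros HO HC Hp Hk; destruct p as [x y].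
  assert (Hd : differentiable_pt_lim (fun a b => g (a, b)) x y (gx (x, y)) (gy (x, y))).
  { apply filterdiff_differentiable_pt_lim.
    eapply filterdiff_ext_lin.
    - apply (is_derive_filterdiff (fun a b => g (a, b)) x y (fun a b => gx (a, b)) (gy (x, y))).
      + apply filter_imp with (2 := HO (x, y) Hp); intros [a b] Hab; exact (proj1 (HC _ Hab)).
      + exact (proj1 (proj2 (HC _ Hp))).
      + eapply continuous_ext; [| exact (proj1 (proj2 (proj2 (proj2 (HC _ Hp)))))].
        intros [a b]; reflexivity.
    - intros [a b]; simpl; unfold plus, scal; simpl; unfold mult; simpl; ring. }
  assert (Hl : derivable_pt_lim (fun s => g (x + s * v1, y + s * v2)) 0
                 (gx (x, y) * v1 + gy (x, y) * v2)).
  { apply (derivable_pt_lim_comp_2d (fun a b => g (a, b))).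
    - rewrite !Rmult_0_l, !Rplus_0_r; exact Hd.
    - apply is_derive_Reals; auto_derive; auto; ring.
    - apply is_derive_Reals; auto_derive; auto; ring. }
  destruct (Hl k Hk) as [d Hdd]; exists d; split; [apply cond_pos |].
  intros s [Hs1 Hs2]; simpl.
  specialize (Hdd s ltac:(lra) ltac:(rewrite Rabs_pos_eq; lra)).
  rewrite Rplus_0_l, !Rmult_0_l, !Rplus_0_r in Hdd.
  replace (g (x + s * v1, y + s * v2) - g (x, y) - s * (v1 * gx (x, y) + v2 * gy (x, y)))
    with (s * ((g (x + s * v1, y + s * v2) - g (x, y)) / s - (gx (x, y) * v1 + gy (x, y) * v2)))
    by (field; lra).
  rewrite Rabs_mult, (Rabs_pos_eq s) by lra; nra.
Qed.

Lemma exists_pos_small (a b c M : R) : 0 < a -> 0 < b -> 0 < c -> 0 <= M ->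
  exists x, 0 < x /\ x < a /\ x < b /\ x * M < c.
Proof.
  intros Ha Hb Hc HM; set (m := Rmin (Rmin a b) (c / (M + 1))).
  assert (Hm : 0 < m) by (apply Rmin_pos; [apply Rmin_pos | apply Rdiv_lt_0_compat]; lra).
  assert (HmM : m * (M + 1) <= c).
  { apply Rle_trans with (c / (M + 1) * (M + 1)); [apply Rmult_le_compat_r; [lra | apply Rmin_r] |].
    right; field; lra. }
  exists (m / 2); generalize (Rmin_l (Rmin a b) (c / (M + 1))) (Rmin_l a b) (Rmin_r a b).
  fold m; intros; repeat split; nra.
Qed.

Lemma det_shift_neq0 (ax ay bx by' ux uy vx vy h t : R) :
  Rabs (ax * by' - ay * bx) + Rabs h > 0 -> (ax * by' - ay * bx) * h >= 0 ->
  ux * vy - uy * vx = h -> by' * ux - bx * uy - ay * vx + ax * vy = 0 -> 0 < t ->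
  (ux + t * ax) * (vy + t * by') - (uy + t * ay) * (vx + t * bx) <> 0.
Proof.
  intros Hnz Hsg Hh Hlin Ht.
  replace ((ux + t * ax) * (vy + t * by') - (uy + t * ay) * (vx + t * bx))
    with ((ux * vy - uy * vx) + t * (by' * ux - bx * uy - ay * vx + ax * vy)
          + t ^ 2 * (ax * by' - ay * bx)) by ring.
  rewrite Hh, Hlin; set (J := ax * by' - ay * bx) in *.
  destruct (Req_dec h 0) as [-> | Eh].
  - assert (J <> 0) by (intros E; rewrite E, Rabs_R0 in Hnz; lra).
    intros E; assert (t ^ 2 * J = 0) by lra.
    destruct (Rmult_integral _ _ H0); [nra | contradiction].
  - intros E; assert (0 < h * h) by (apply Rsqr_pos_lt in Eh; exact Eh).
    assert (h * (h + t * 0 + t ^ 2 * J) = 0) by (rewrite E; ring); nra.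
Qed.

Lemma quasi_convex_le_max (psi : R2 -> R) (a b : R2) (t : R) :
  quasi_convex psi -> 0 <= t <= 1 ->
  psi ((1 - t) * fst a + t * fst b, (1 - t) * snd a + t * snd b) <= Rmax (psi a) (psi b).
Proof. intros Hq Ht; apply (Hq _ a b t); [apply Rmax_l | apply Rmax_r | exact Ht]. Qed.

(* y0 is the convex combination of y and z0 - e / s with weights 1 : s, where
   e = y - (y0 + s (y0 - z0)) *)
Lemma quasi_convex_ray (psi : R2 -> R) (z0 y0 y : R2) (s : R) :
  quasi_convex psi -> 0 < s ->
  psi y0 <= Rmax (psi y)
    (psi (fst z0 - (fst y - fst y0 - s * (fst y0 - fst z0)) / s,
          snd z0 - (snd y - snd y0 - s * (snd y0 - snd z0)) / s)).
Proof.
  intros Hq Hs.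
  eapply Rle_trans; [| apply (quasi_convex_le_max psi _ _ (s / (1 + s)) Hq)].
  - right; f_equal; destruct y0 as [a b]; simpl; f_equal; field; lra.
  - split; [apply Rdiv_le_0_compat; lra |].
    apply Rmult_le_reg_r with (1 + s); [lra |]; unfold Rdiv; rewrite Rmult_assoc, Rinv_l; lra.
Qed.

Lemma sq_dist_ray_gt (w1 w2 e1 e2 k s : R) :
  0 < s <= 1 -> Rabs e1 <= k * s -> Rabs e2 <= k * s ->
  2 * k * (Rabs w1 + Rabs w2) < w1 ^ 2 + w2 ^ 2 ->
  w1 ^ 2 + w2 ^ 2 < ((1 + s) * w1 + e1) ^ 2 + ((1 + s) * w2 + e2) ^ 2.
Proof.
  intros Hs He1 He2 Hk.
  assert (Hwe : forall w e, Rabs e <= k * s -> - (Rabs w * (k * s)) <= w * e).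
  { intros w e He; assert (Rabs (w * e) <= Rabs w * (k * s))
      by (rewrite Rabs_mult; apply Rmult_le_compat_l; [apply Rabs_pos | exact He]).
    apply Rabs_le_between in H; lra. }
  assert (H1 := Hwe w1 e1 He1); assert (H2 := Hwe w2 e2 He2).
  assert (Hks : 0 <= k * s) by (generalize (Rabs_pos e1); lra).
  assert (Hk0 : 0 <= k) by nra.
  nra.
Qed.

Lemma quasi_convex_outward_step (psi : R2 -> R) (z0 y0 y : R2) (s k dz : R) :
  quasi_convex psi -> 0 < s <= 1 -> k < dz ->
  (forall z, near z0 z dz -> psi z < psi y0) ->
  Rabs (fst y - fst y0 - s * (fst y0 - fst z0)) <= k * s ->
  Rabs (snd y - snd y0 - s * (snd y0 - snd z0)) <= k * s ->
  2 * k * (Rabs (fst y0 - fst z0) + Rabs (snd y0 - snd z0)) <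
    (fst y0 - fst z0) ^ 2 + (snd y0 - snd z0) ^ 2 ->
  psi y <= psi y0 ->
  psi y = psi y0 /\
  (fst y0 - fst z0) ^ 2 + (snd y0 - snd z0) ^ 2 < (fst y - fst z0) ^ 2 + (snd y - snd z0) ^ 2.
Proof.
  intros Hqc Hs Hkdz Hz He1 He2 Hk Hle.
  set (e1 := fst y - fst y0 - s * (fst y0 - fst z0)) in *.
  set (e2 := snd y - snd y0 - s * (snd y0 - snd z0)) in *.
  split.
  - (* otherwise y0 is a convex combination of y and a point near z0, both below psi y0 *)
    apply Rle_antisym; [exact Hle |]; apply Rnot_lt_le; intros Hlt.
    assert (Hsmall : forall e, Rabs e <= k * s -> Rabs (- (e / s)) < dz).
    { intros e He; rewrite Rabs_Ropp; unfold Rdiv; rewrite Rabs_mult, Rabs_inv, (Rabs_pos_eq s) by lra.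
      apply Rle_lt_trans with k; [| exact Hkdz].
      apply Rmult_le_reg_r with s; [lra |]; rewrite Rmult_assoc, Rinv_l; lra. }
    assert (Hz' : psi (fst z0 - e1 / s, snd z0 - e2 / s) < psi y0).
    { apply Hz; unfold near; simpl.
      replace (fst z0 - e1 / s - fst z0) with (- (e1 / s)) by ring.
      replace (snd z0 - e2 / s - snd z0) with (- (e2 / s)) by ring; auto. }
    assert (H := quasi_convex_ray psi z0 y0 y s Hqc ltac:(lra)); fold e1 e2 in H.
    apply (Rlt_irrefl (psi y0)); eapply Rle_lt_trans; [exact H | apply Rmax_lub_lt; assumption].
  - replace (fst y - fst z0) with ((1 + s) * (fst y0 - fst z0) + e1) by (unfold e1; ring).
    replace (snd y - snd z0) with ((1 + s) * (snd y0 - snd z0) + e2) by (unfold e2; ring).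
    apply (sq_dist_ray_gt _ _ e1 e2 k s); assumption.
Qed.

Lemma jacobian_singular_at_farthest_max (O : R2 -> Prop) (f fx fy g gx gy psi : R2 -> R)
    (p z0 : R2) (r : R) :
  open O -> C1_on O f fx fy -> C1_on O g gx gy -> O p -> 0 < r ->
  continuous psi z0 -> quasi_convex psi -> psi z0 < psi (f p, g p) ->
  (forall q, near p q r -> psi (f q, g q) <= psi (f p, g p)) ->
  (forall q, near p q r -> psi (f q, g q) = psi (f p, g p) ->
     (f q - fst z0) ^ 2 + (g q - snd z0) ^ 2 <= (f p - fst z0) ^ 2 + (g p - snd z0) ^ 2) ->
  fx p * gy p - fy p * gx p = 0.
Proof.
  intros HO Hf Hg Hp Hr Hz Hqc Hz0 Hmax Hfar; apply NNPP; intros Hdet.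
  set (w1 := f p - fst z0) in *; set (w2 := g p - snd z0) in *.
  assert (HW : 0 < w1 ^ 2 + w2 ^ 2).
  { destruct (Req_dec w1 0); [destruct (Req_dec w2 0) |]; try nra.
    replace z0 with (f p, g p) in Hz0 by (destruct z0; unfold w1, w2 in *; simpl in *; f_equal; lra).
    lra. }
  (* move along the preimage v of w = F(p) - z0 under the (invertible) Jacobian *)
  set (v1 := (gy p * w1 - fy p * w2) / (fx p * gy p - fy p * gx p)).
  set (v2 := (fx p * w2 - gx p * w1) / (fx p * gy p - fy p * gx p)).
  assert (Hv1 : v1 * fx p + v2 * fy p = w1) by (unfold v1, v2; field; exact Hdet).
  assert (Hv2 : v1 * gx p + v2 * gy p = w2) by (unfold v1, v2; field; exact Hdet).
  destruct (continuous_near psi z0 Hz (psi (f p, g p) - psi z0)) as [dz [Hdz Hdz']]; [lra |].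
  assert (Hbelow : forall z, near z0 z dz -> psi z < psi (f p, g p))
    by (intros z Hzz; specialize (Hdz' z Hzz); apply Rabs_def2 in Hdz'; lra).
  set (S := Rabs w1 + Rabs w2).
  assert (HS : 0 <= S) by (unfold S; generalize (Rabs_pos w1) (Rabs_pos w2); lra).
  destruct (exists_pos_small dz 1 (w1 ^ 2 + w2 ^ 2) (2 * S)) as [k [Hk [Hkdz [_ HkS]]]]; [lra .. |].
  assert (HkW : 2 * k * (Rabs w1 + Rabs w2) < w1 ^ 2 + w2 ^ 2) by (unfold S in HkS; lra).
  destruct (C1_on_directional O f fx fy p v1 v2 k HO Hf Hp Hk) as [s1 [Hs1 Hs1']].
  destruct (C1_on_directional O g gx gy p v1 v2 k HO Hg Hp Hk) as [s2 [Hs2 Hs2']].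
  set (V := Rabs v1 + Rabs v2 + 1).
  assert (HV : 0 <= V) by (unfold V; generalize (Rabs_pos v1) (Rabs_pos v2); lra).
  destruct (exists_pos_small (Rmin s1 s2) 1 r V) as [s [Hs [Hs12 [Hs1l HsV]]]];
    [apply Rmin_pos | lra | lra | lra |]; auto.
  generalize (Rmin_l s1 s2) (Rmin_r s1 s2); intros Hm1 Hm2.
  set (q := (fst p + s * v1, snd p + s * v2)).
  assert (Hq : near p q r).
  { unfold near, q, V in *; simpl; rewrite !Rplus_minus_l, !Rabs_mult, !(Rabs_pos_eq s) by lra.
    generalize (Rabs_pos v1) (Rabs_pos v2); split; nra. }
  assert (He1 : Rabs (f q - f p - s * w1) <= k * s) by (rewrite <- Hv1; apply Hs1'; lra).
  assert (He2 : Rabs (g q - g p - s * w2) <= k * s) by (rewrite <- Hv2; apply Hs2'; lra).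
  destruct (quasi_convex_outward_step psi z0 (f p, g p) (f q, g q) s k dz Hqc ltac:(lra) Hkdz
              Hbelow He1 He2 HkW (Hmax q Hq)) as [Heq Hfarther].
  specialize (Hfar q Hq Heq); simpl in Hfarther; fold w1 w2 in Hfarther; lra.
Qed.

Lemma inv_INR_S_vanishes (f : nat -> nat) : (forall k, (k <= f k)%nat) ->
  forall e, 0 < e -> exists N, forall k, (N <= k)%nat -> Rabs (/ INR (S (f k))) < e.
Proof.
  intros Hf e He; destruct (inv_INR_S_lt e He) as [N HN]; exists N; intros k Hk.
  rewrite Rabs_pos_eq by (left; apply inv_INR_S_pos).
  apply HN; specialize (Hf k); lia.
Qed.

Lemma superlevel_set_interior (O : R2 -> Prop) (g : R2 -> R) (M : R) :
  open O -> bounded2 O ->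
  (forall b, boundary2 O b -> exists e, 0 < e /\ exists m, m < M /\
     forall q, O q -> near b q e -> g q <= m) ->
  exists c, c < M /\ exists d, 0 < d /\
    forall q, O q -> c <= g q -> forall y, near q y d -> O y.
Proof.
  intros HO Hbd Hgap; destruct (bounded2_box O Hbd) as [B HB]; apply NNPP; intros Hc.
  assert (Hn : forall n, exists qy : R2 * R2, O (fst qy) /\ M - / INR (S n) <= g (fst qy) /\
             near (fst qy) (snd qy) (/ INR (S n)) /\ ~ O (snd qy)).
  { intros n; apply NNPP; intros Hn; apply Hc.
    exists (M - / INR (S n)); split; [generalize (inv_INR_S_pos n); lra |].
    exists (/ INR (S n)); split; [apply inv_INR_S_pos |].
    intros q Hq Hcq y Hy; apply NNPP; intros Hy'; apply Hn; exists (q, y); auto. }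
  destruct (choice _ Hn) as [qy Hqy].
  destruct (bounded_seq_convergent_subseq (fun n => fst (qy n)) B
              (fun n => HB _ (proj1 (Hqy n)))) as [s [Hs [l Hl]]].
  assert (Hsmall : forall e, 0 < e -> exists N, forall k, (N <= k)%nat -> / INR (S (s k)) < e).
  { intros e He; destruct (inv_INR_S_vanishes s (strictly_increasing_ge s Hs) e He) as [N HN].
    exists N; intros k Hk; specialize (HN k Hk); rewrite Rabs_pos_eq in HN; [exact HN |].
    left; apply inv_INR_S_pos. }
  destruct (classic (O l)) as [Ol | nOl].
  - (* the outside points snd (qy n) converge to l as well *)
    destruct (open_near O l HO Ol) as [d [Hd Hd']].
    destruct (Hl (d / 2)) as [N1 HN1]; [lra |]; destruct (Hsmall (d / 2)) as [N2 HN2]; [lra |].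
    destruct (Hqy (s (max N1 N2))) as [_ [_ [Hnr Hno]]].
    apply Hno, Hd'; replace d with (d / 2 + d / 2) by field.
    apply (near_trans _ (fst (qy (s (max N1 N2))))); [apply HN1; lia |].
    eapply near_le; [exact Hnr | left; apply HN2; lia].
  - destruct (Hgap l (converges_boundary2 O _ l (fun k => proj1 (Hqy (s k))) Hl nOl))
      as [e [He [m [Hm Hmq]]]].
    destruct (Hl e He) as [N1 HN1]; destruct (Hsmall (M - m)) as [N2 HN2]; [lra |].
    destruct (Hqy (s (max N1 N2))) as [Ho [Hge _]].
    specialize (Hmq _ Ho (HN1 (max N1 N2) ltac:(lia))); specialize (HN2 (max N1 N2) ltac:(lia)).
    lra.
Qed.

Lemma superlevel_seq_closed (O : R2 -> Prop) (g : R2 -> R) (c d : R) :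
  (forall q, O q -> continuous g q) -> 0 < d ->
  (forall q, O q -> c <= g q -> forall y, near q y d -> O y) ->
  forall q l, (forall n, O (q n) /\ c <= g (q n)) -> converges q l -> O l /\ c <= g l.
Proof.
  intros Hg Hd Hin q l Hq Hl; destruct (Hl d Hd) as [N HN].
  assert (Ol : O l)
    by (destruct (Hq N) as [HqN HcN]; exact (Hin _ HqN HcN l (near_sym _ _ _ (HN N (le_n N))))).
  split; [exact Ol |]; apply Rnot_lt_le; intros Hlt.
  destruct (converges_continuous q l g Hl (Hg l Ol) (c - g l)) as [N' HN']; [lra |].
  specialize (HN' N' (le_n _)); destruct (Hq N') as [_ Hc']; apply Rabs_def2 in HN'; lra.
Qed.

Section Perturbation.

Variables (K : R2 -> Prop) (u v a b psi : R2 -> R) (B : R).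
Hypothesis K_bounded : forall p, K p -> Rabs (fst p) <= B /\ Rabs (snd p) <= B.
Hypothesis K_closed : forall q l, (forall n, K (q n)) -> converges q l -> K l.
Hypothesis psi_continuous : forall z, continuous psi z.
Hypotheses (u_continuous : forall p, K p -> continuous u p)
  (v_continuous : forall p, K p -> continuous v p)
  (a_continuous : forall p, K p -> continuous a p)
  (b_continuous : forall p, K p -> continuous b p).

Let F (t : R) (x : R2) : R := psi (perturb u a t x, perturb v b t x).

Lemma perturbed_continuous_on t p : K p -> continuous (F t) p.
Proof.
  intros Kp; apply continuous_comp_R2; [exact psi_continuous | |];
    apply continuous_perturb; auto.
Qed.

Lemma perturbed_limit_on (p : R2) (q : nat -> R2) (t : nat -> R) :
  K p -> converges q p ->
  (forall e, 0 < e -> exists N, forall k, (N <= k)%nat -> Rabs (t k) < e) ->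
  forall e, 0 < e -> exists N, forall k, (N <= k)%nat -> Rabs (F (t k) (q k) - psi (u p, v p)) < e.
Proof. intros Kp; apply perturbed_limit; auto. Qed.

Lemma small_perturbation_keeps_level (p0 z0 : R2) (c : R) :
  K p0 -> psi z0 < psi (u p0, v p0) -> c < psi (u p0, v p0) ->
  exists t, 0 < t /\ psi z0 < F t p0 /\
    forall p, K p -> (forall x, K x -> F t x <= F t p) -> c < psi (u p, v p).
Proof.
  intros Kp0 Hz0 Hc; set (M := psi (u p0, v p0)) in *.
  destruct (perturbed_limit_on p0 (fun _ => p0) (fun n => / INR (S n)) Kp0 (converges_const p0)
              (inv_INR_S_vanishes (fun k => k) (fun k => le_n k)) (M - psi z0)) as [N1 HN1];
    [lra |].
  apply NNPP; intros Hno.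
  assert (Hbad : forall n, exists p, K p /\
            (forall x, K x -> F (/ INR (S (n + N1))) x <= F (/ INR (S (n + N1))) p) /\
            psi (u p, v p) <= c).
  { intros n; apply NNPP; intros Hn; apply Hno; exists (/ INR (S (n + N1))).
    split; [apply inv_INR_S_pos | split].
    - specialize (HN1 (n + N1)%nat ltac:(lia)); apply Rabs_def2 in HN1; unfold M in *; lra.
    - intros p Kp Hmax; apply Rnot_le_lt; intros Hle; apply Hn; eauto. }
  destruct (choice _ Hbad) as [ps Hps].
  destruct (bounded_seq_convergent_subseq ps B (fun n => K_bounded _ (proj1 (Hps n))))
    as [s [Hs [l Hl]]].
  assert (Kl := K_closed _ l (fun k => proj1 (Hps (s k))) Hl).
  assert (Htk := inv_INR_S_vanishes (fun k => s k + N1)%nat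
                   (fun k => Nat.le_trans _ _ _ (strictly_increasing_ge s Hs k) (Nat.le_add_r _ _))).
  set (delta := (M - c) / 3).
  destruct (perturbed_limit_on l _ _ Kl Hl Htk delta) as [Na HNa]; [unfold delta; lra |].
  destruct (perturbed_limit_on p0 _ _ Kp0 (converges_const p0) Htk delta) as [Nb HNb];
    [unfold delta; lra |].
  destruct (converges_continuous _ l (fun x => psi (u x, v x)) Hl
              (continuous_comp_R2 psi u v l psi_continuous (u_continuous l Kl) (v_continuous l Kl))
              delta) as [Nc HNc]; [unfold delta; lra |].
  set (k := max Na (max Nb Nc)).
  specialize (HNa k ltac:(unfold k; lia)); specialize (HNb k ltac:(unfold k; lia));
    specialize (HNc k ltac:(unfold k; lia)).
  destruct (Hps (s k)) as [_ [Hmax Hle]]; specialize (Hmax p0 Kp0).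
  apply Rabs_def2 in HNa; apply Rabs_def2 in HNb; apply Rabs_def2 in HNc.
  unfold delta, M in *; lra.
Qed.

Lemma farthest_perturbed_max (t : R) (z0 : R2) : (exists x, K x) ->
  exists p, K p /\ (forall x, K x -> F t x <= F t p) /\
    forall x, K x -> F t x = F t p ->
      (perturb u a t x - fst z0) ^ 2 + (perturb v b t x - snd z0) ^ 2 <=
      (perturb u a t p - fst z0) ^ 2 + (perturb v b t p - snd z0) ^ 2.
Proof.
  intros Hne.
  destruct (seq_compact_attains_max K (F t) B Hne K_bounded K_closed (perturbed_continuous_on t))
    as [pm [Kpm Hpm]].
  destruct (seq_compact_attains_max (fun x => K x /\ F t x = F t pm)
              (fun x => (perturb u a t x - fst z0) ^ 2 + (perturb v b t x - snd z0) ^ 2) B)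
    as [p [[Kp Hp] Hfar]].
  - exists pm; auto.
  - intros x [Kx _]; auto.
  - intros q l Hq Hl; assert (Kl := K_closed q l (fun n => proj1 (Hq n)) Hl); split; [exact Kl |].
    apply NNPP; intros Hneq.
    destruct (converges_continuous q l (F t) Hl (perturbed_continuous_on t l Kl)
                (Rabs (F t l - F t pm))) as [N HN].
    { apply Rabs_pos_lt; intros E; apply Hneq; lra. }
    specialize (HN N (le_n N)); rewrite (proj2 (Hq N)), Rabs_minus_sym in HN; lra.
  - intros x [Kx _]; apply continuous_sq_dist; apply continuous_perturb; auto.
  - exists p; split; [exact Kp | split].
    + intros x Kx; rewrite Hp; apply Hpm, Kx.
    + intros x Kx Hx; apply Hfar; split; [exact Kx | congruence].
Qed.

End Perturbation.

Lemma max_attained_inside (O : R2 -> Prop) (g : R2 -> R) :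
  (exists p, O p) -> bounded2 O -> (forall q, O q -> continuous g q) ->
  (forall b, boundary2 O b -> exists e, 0 < e /\ exists m : R,
     Rbar_lt m (sup_on O g) /\ forall q, O q -> near b q e -> g q <= m) ->
  exists p, O p /\ forall a, O a -> g a <= g p.
Proof.
  intros Hne Hbd Hg Hgap; destruct (bounded2_box O Hbd) as [B HB].
  apply (attains_max O g B Hne HB).
  intros q l Hq Hl Hmaxq; destruct (classic (O l)) as [Ol | nOl]; [auto | exfalso].
  destruct (Hgap l (converges_boundary2 O q l Hq Hl nOl)) as [e [He [m [Hm Hmq]]]].
  destruct (Hmaxq m Hm) as [N1 HN1]; destruct (Hl e He) as [N2 HN2].
  specialize (HN1 (max N1 N2) ltac:(lia)); specialize (Hmq _ (Hq _) (HN2 (max N1 N2) ltac:(lia))).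
  lra.
Qed.

Lemma sup_not_separated_from_boundary (O : R2 -> Prop) (h alpha alphax alphay beta betax betay
    u ux uy v vx vy psi : R2 -> R) :
  open O -> (exists p, O p) -> bounded2 O ->
  C1_on O alpha alphax alphay -> C1_on O beta betax betay ->
  (forall p, O p ->
     Rabs (alphax p * betay p - alphay p * betax p) + Rabs (h p) > 0) ->
  (forall p, O p -> (alphax p * betay p - alphay p * betax p) * h p >= 0) ->
  C1_on O u ux uy -> C1_on O v vx vy ->
  (forall p, O p -> ux p * vy p - uy p * vx p = h p) ->
  (forall p, O p ->
     betay p * ux p - betax p * uy p - alphay p * vx p + alphax p * vy p = 0) ->
  (forall z, continuous psi z) -> quasi_convex psi ->
  ~ (forall b, boundary2 O b -> exists e, 0 < e /\ exists m : R,
       Rbar_lt m (sup_on O (fun x => psi (u x, v x))) /\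
       forall q, O q -> near b q e -> psi (u q, v q) <= m).
Proof.
  intros HO Hne Hbd Ha Hb HJ Hsg Hu Hv Hh Hlin Hpsi Hqc Hgap.
  destruct (bounded2_box O Hbd) as [B HB].
  assert (Cphi : forall q, O q -> continuous (fun x => psi (u x, v x)) q)
    by (intros q Hq; apply continuous_comp_R2; [exact Hpsi | apply (Hu q Hq) | apply (Hv q Hq)]).
  destruct (max_attained_inside O _ Hne Hbd Cphi Hgap) as [p0 [Hp0 Hmax]].
  rewrite (sup_on_max O _ p0 Hp0 Hmax) in Hgap; simpl in Hgap.
  assert (Hz0 : exists z0, psi z0 < psi (u p0, v p0)).
  { destruct (boundary2_exists O Hne Hbd) as [b Hb'].
    destruct (Hgap b Hb') as [e [He [m [Hm Hmq]]]]; destruct (proj1 Hb' e He) as [q [Hq Hqb]].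
    exists (u q, v q); specialize (Hmq q Hq (near_of_dist2 _ _ _ Hqb)); lra. }
  destruct Hz0 as [z0 Hz0].
  destruct (superlevel_set_interior O (fun x => psi (u x, v x)) (psi (u p0, v p0)) HO Hbd Hgap)
    as [c [Hc [d [Hd Hin]]]].
  set (K := fun x => O x /\ c <= psi (u x, v x)).
  assert (HK : forall x, K x -> O x) by (intros x [Hx _]; exact Hx).
  assert (Kp0 : K p0) by (split; [exact Hp0 | lra]).
  assert (HKb : forall x, K x -> Rabs (fst x) <= B /\ Rabs (snd x) <= B) by auto.
  assert (HKc : forall q l, (forall n, K (q n)) -> converges q l -> K l)
    by exact (superlevel_seq_closed O _ c d Cphi Hd Hin).
  assert (Cont : forall f fx fy, C1_on O f fx fy -> forall x, K x -> continuous f x)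
    by (intros f fx fy Hf x Kx; exact (C1_on_continuous O f fx fy x Hf (HK x Kx))).
  destruct (small_perturbation_keeps_level K u v alpha beta psi B HKb HKc Hpsi
              (Cont u ux uy Hu) (Cont v vx vy Hv) (Cont alpha alphax alphay Ha)
              (Cont beta betax betay Hb) p0 z0 c Kp0 Hz0 Hc) as [t [Ht [Hzt Hlevel]]].
  destruct (farthest_perturbed_max K u v alpha beta psi B HKb HKc Hpsi
              (Cont u ux uy Hu) (Cont v vx vy Hv) (Cont alpha alphax alphay Ha)
              (Cont beta betax betay Hb) t z0 (ex_intro _ p0 Kp0)) as [p [Kp [Hpmax Hpfar]]].
  destruct (superlevel_box O (fun x => psi (u x, v x)) c p HO (HK p Kp) (Cphi p (HK p Kp))
              (Hlevel p Kp Hpmax)) as [r [Hr Hbox]].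
  apply (det_shift_neq0 (alphax p) (alphay p) (betax p) (betay p) (ux p) (uy p) (vx p) (vy p)
           (h p) t (HJ p (HK p Kp)) (Hsg p (HK p Kp)) (Hh p (HK p Kp)) (Hlin p (HK p Kp)) Ht).
  apply (jacobian_singular_at_farthest_max O _ _ _ _ _ _ psi p z0 r HO
           (C1_on_perturb O u ux uy alpha alphax alphay t Hu Ha)
           (C1_on_perturb O v vx vy beta betax betay t Hv Hb) (HK p Kp) Hr (Hpsi z0) Hqc).
  - exact (Rlt_le_trans _ _ _ Hzt (Hpmax p0 Kp0)).
  - intros q Hq; exact (Hpmax q (Hbox q Hq)).
  - intros q Hq; exact (Hpfar q (Hbox q Hq)).
Qed.

Theorem theorem4 (O : R2 -> Prop) (h alpha alphax alphay beta betax betay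
    u ux uy v vx vy : R2 -> R) :
  open O -> (exists p, O p) -> bounded2 O ->
  (forall p, O p -> continuous h p) ->
  C1_on O alpha alphax alphay -> C1_on O beta betax betay ->
  (forall p, O p ->
     Rabs (alphax p * betay p - alphay p * betax p) + Rabs (h p) > 0) ->
  (forall p, O p -> (alphax p * betay p - alphay p * betax p) * h p >= 0) ->
  C1_on O u ux uy -> C1_on O v vx vy ->
  (forall p, O p -> ux p * vy p - uy p * vx p = h p) ->
  (forall p, O p ->
     betay p * ux p - betax p * uy p - alphay p * vx p + alphax p * vy p = 0) ->
  convex_hull_like O (fun p => (u p, v p)).
Proof.
  intros HO Hne Hbd _ Ha Hb HJ Hsg Hu Hv Hh Hlin psi Hpsi Hqc.
  set (phi := fun x => psi (u x, v x)).
  destruct (classic (exists b, boundary2 O b /\ Rbar_le (sup_on O phi) (limsup_on O phi b)))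
    as [[b [Hb' Hle]] | Hno].
  - exists b; split; [exact Hb' |].
    apply Rbar_le_antisym; [apply limsup_on_le_sup_on | exact Hle].
  - exfalso; apply (sup_not_separated_from_boundary O h alpha alphax alphay beta betax betay
                      u ux uy v vx vy psi HO Hne Hbd Ha Hb HJ Hsg Hu Hv Hh Hlin Hpsi Hqc).
    intros b Hb'; apply limsup_on_lt_sup_on; [exact Hb' |].
    apply Rbar_not_le_lt; intros Hc; apply Hno; exists b; auto.
Qed.
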